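(* If there exists a projective plane of order $s\ge2$ (equivalently a Steiner system $S(2,s+1,s^2+s+1)$), then $q''_0(2,s+1,s^2+s+1)=s^2+1$; that is, the smallest $q$ for which there exists an $(s^2+s+1,\,s^2,\,s^2+s)_q$ code of size $s^2+s+1$ is $s^2+1$.
   Context: $\mathbb{Z}_q=\{0,\dots,q-1\}$ (an alphabet); $\mathrm{wt}$ = number of nonzero coordinates; $d$ = Hamming distance; $J_q(n,w)$ = weight-$w$ words of $\mathbb{Z}_q^n$. An $(n,w,d)_q$ code of size $M$ is a subset $C\subseteq J_q(n,w)$ with $|C|=M$ and pairwise distances at least $d$. A Steiner system $S(t,k,n)$ is a pair $(N,B)$, $|N|=n$, $B$ a set of $k$-subsets (blocks) with every $t$-subset in exactly one block. For $t,k,n$ such that an $S(t,k,n)$ exists, $q''_0(t,k,n)$ is the smallest $q$ for which an $(n,n-k,n-t+1)_q$ code of size $\binom{n}{t}/\binom{k}{t}$ exists. *)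

From mathcomp Require Import all_boot.
Unset Printing Implicit Defensive.

Definition word (q n : nat) := {ffun 'I_n -> 'I_q}.

Definition wt {q n : nat} (x : word q n) : nat := #|[set i | nat_of_ord (x i) != 0]|.

Definition hdist {q n : nat} (x y : word q n) : nat := #|[set i | x i != y i]|.

Definition is_code (q n w d M : nat) (C : {set word q n}) : Prop :=
  #|C| = M /\
  (forall x, x \in C -> wt x = w) /\
  (forall x y, x \in C -> y \in C -> x != y -> (d <= hdist x y)%N).

Definition code_exists (q n w d M : nat) : Prop :=
  exists C : {set word q n}, is_code q n w d M C.

Definition steiner_system (t k n : nat) (B : {set {set 'I_n}}) : Prop :=
  (forall b, b \in B -> #|b| = k) /\
  (forall T : {set 'I_n}, #|T| = t -> exists! b, b \in B /\ T \subset b).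

Definition is_q0pp (t k n m : nat) : Prop :=
  code_exists m n (n - k) (n - t + 1) ('C(n, t) %/ 'C(k, t)) /\
  (forall q, q < m -> ~ code_exists q n (n - k) (n - t + 1) ('C(n, t) %/ 'C(k, t))).

(* Lower bound: for each coordinate count how often each symbol occurs.
   Distinct codewords agree in at most one position, so the squared counts
   sum to at most n (2n - 1) over all coordinates; comparing the counts of
   each column with the profile (s + 1, 1, ..., 1) by AM-GM then forces
   q >= s^2 + 1.
   Upper bound: index coordinates by points and codewords by lines.  The
   word of a line is 0 on its s + 1 points, and at a point off the line it
   is the rank (1 .. s^2) of the line among the s^2 lines missing that point.
   Two lines meet in one point, so their words agree only there. *)

From mathcomp Require Import all_boot zify.

Lemma card_sum_ind (T : finType) (A : {set T}) : #|A| = \sum_i (i \in A).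
Proof. by rewrite -sum1_card big_mkcond; apply: eq_bigr => i _; case: (i \in A). Qed.

Lemma sum_zero_profile_sqr (q t : nat) :
  \sum_(a < q) (if (a : nat) == 0 then t else 1) ^ 2 <= t ^ 2 + q.-1.
Proof.
case: q => [|q]; first by rewrite big_ord0.
by rewrite big_ord_recl /= (eq_bigr (fun _ => 1)) // sum1_card card_ord.
Qed.

Section CodeCounting.
Context {q n : nat}.
Implicit Types (x y : word q n) (C : {set word q n}).

Definition agree x y : nat := #|[set i | x i == y i]|.

Lemma agree_hdist x y : agree x y + hdist x y = n.
Proof.
rewrite /agree /hdist (_ : [set i | x i != y i] = ~: [set i | x i == y i]).
  by rewrite cardsC card_ord.
by apply/setP => i; rewrite !inE.
Qed.

Lemma wt_sum x : wt x = \sum_i ((x i : nat) != 0).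
Proof. by rewrite /wt card_sum_ind; apply: eq_bigr => i _; rewrite inE. Qed.

Definition sym_count C i a : nat := \sum_(x in C) (x i == a).

Lemma sum_sym_count_weight C i (f : 'I_q -> nat) :
  \sum_a sym_count C i a * f a = \sum_(x in C) f (x i).
Proof.
under eq_bigr => a _ do rewrite big_distrl /=.
rewrite exchange_big /=; apply: eq_bigr => x _.
rewrite (bigD1 (x i)) //= eqxx mul1n big1 ?addn0 // => a.
by rewrite eq_sym => /negbTE ->.
Qed.

Lemma sum_sym_count_sqr C :
  \sum_i \sum_a sym_count C i a ^ 2 = \sum_(x in C) \sum_(y in C) agree x y.
Proof.
under eq_bigr => i _ do under eq_bigr => a _ do rewrite -mulnn.
under eq_bigr => i _ do rewrite sum_sym_count_weight.
rewrite exchange_big /=; apply: eq_bigr => x _.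
rewrite exchange_big /=; apply: eq_bigr => y _.
by rewrite /agree card_sum_ind; apply: eq_bigr => i _; rewrite inE eq_sym.
Qed.

Lemma sum_agree_le C :
  (forall x y, x \in C -> y \in C -> x != y -> n.-1 <= hdist x y) ->
  \sum_(x in C) \sum_(y in C) agree x y <= #|C| * (n + #|C|.-1).
Proof.
move=> hd; rewrite -sum_nat_const; apply: leq_sum => x xC.
rewrite (bigD1 x) //= leq_add //.
  rewrite /agree (_ : [set i | _] = setT) ?cardsT ?card_ord //.
  by apply/setP => i; rewrite !inE eqxx.
have -> : #|C|.-1 = \sum_(y in C | y != x) 1.
  by rewrite (cardsD1 x C) xC -sum1_card; apply: eq_bigl => y; rewrite !inE andbC.
apply: leq_sum => y /andP [yC yx]; have := agree_hdist x y.
by have := hd x y xC yC; rewrite eq_sym yx => /(_ isT); lia.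
Qed.

(* Weighting symbol [0] by [t] and every other symbol by [1], the AM-GM
   inequality [2 c f <= c^2 + f^2] compares the symbol counts of each column
   with the fixed profile [f]; summing over columns bounds the alphabet size. *)
Lemma code_alphabet_bound (t : nat) {w M : nat} {C : {set word q n}} :
  is_code q n w n.-1 M C ->
  2 * M * (t * (n - w) + w) <= M * (n + M.-1) + n * (t ^ 2 + q.-1).
Proof.
move=> [<- [hw hd]].
pose f (a : 'I_q) := if (a : nat) == 0 then t else 1.
have sum_cf : \sum_i \sum_a sym_count C i a * f a = #|C| * (t * (n - w) + w).
  under eq_bigr => i _ do rewrite sum_sym_count_weight.
  rewrite exchange_big /= -sum_nat_const; apply: eq_bigr => x xC.
  have zeros_wt : \sum_i ((x i : nat) == 0) + w = n.
    rewrite -(hw x xC) wt_sum -big_split /= -[n in _ = n]card_ord -sum1_card.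
    by apply: eq_bigr => i _; case: (nat_of_ord (x i) == 0).
  have -> : \sum_i f (x i) = t * \sum_i ((x i : nat) == 0) + \sum_i ((x i : nat) != 0).
    rewrite big_distrr -big_split; apply: eq_bigr => i _.
    by rewrite /f /=; case: (nat_of_ord (x i) == 0); rewrite ?muln1 ?muln0 ?addn0.
  by rewrite -wt_sum hw //; congr (t * _ + _); lia.
have am_gm i : 2 * \sum_a sym_count C i a * f a <=
               \sum_a sym_count C i a ^ 2 + \sum_a f a ^ 2.
  rewrite big_distrr -big_split; apply: leq_sum => a _; exact: (nat_Cauchy _ _).1.
rewrite -mulnA -sum_cf big_distrr /=.
apply: leq_trans; first by apply: leq_sum => i _; exact: am_gm.
rewrite big_split /= sum_nat_const card_ord sum_sym_count_sqr leq_add //.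
  exact: sum_agree_le.
by rewrite leq_mul2l sum_zero_profile_sqr orbT.
Qed.

End CodeCounting.

Lemma projective_code_alphabet_lb (s q : nat) :
  let n := s ^ 2 + s + 1 in code_exists q n (s ^ 2) n.-1 n -> s ^ 2 + 1 <= q.
Proof.
move=> n [C hC].
have n_gt0 : 0 < n by rewrite /n addn1.
(* For [q = 0] the truncated [q.-1] is 0, so [0 < q] must come from elsewhere. *)
have q_gt0 : 0 < q.
  have /card_gt0P [x _] : 0 < #|C| by rewrite hC.1.
  exact: leq_ltn_trans (leq0n _) (ltn_ord (x (Ordinal n_gt0))).
move: (code_alphabet_bound (s + 1) hC).
rewrite -mulnA mulnCA -mulnDr leq_pmul2l // (_ : n - s ^ 2 = s + 1); last by rewrite /n; lia.
rewrite /n -!mulnn; nia.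
Qed.

Definition pencil {n : nat} (B : {set {set 'I_n}}) (p : 'I_n) := [set b in B | p \in b].

Section SteinerPairs.
Context {k n : nat} {B : {set {set 'I_n}}}.
Hypothesis hB : steiner_system 2 k n B.

Lemma steiner_block_through {x y : 'I_n} : x != y ->
  exists2 b, b \in B & (x \in b) && (y \in b).
Proof.
move=> xy; have T2 : #|[set x; y]| = 2 by rewrite cards2 xy.
case: (hB.2 _ T2) => b [[bB Tb] _]; exists b => //.
by rewrite !(subsetP Tb) // !inE eqxx ?orbT.
Qed.

Lemma steiner_meet_le1 {b b' : {set 'I_n}} :
  b \in B -> b' \in B -> b != b' -> #|b :&: b'| <= 1.
Proof.
move=> bB b'B bb'; rewrite leqNgt; apply/negP => /card_gt1P [x [y [+ + xy]]].
rewrite !inE => /andP [xb xb'] /andP [yb yb'].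
have T2 : #|[set x; y]| = 2 by rewrite cards2 xy.
have T_sub (c : {set 'I_n}) : x \in c -> y \in c -> [set x; y] \subset c.
  by move=> xc yc; apply/subsetP => z; rewrite !inE => /orP [] /eqP ->.
case: (hB.2 _ T2) => c [_ uniq_c].
move/eqP: bb'; apply.
rewrite -(uniq_c b (conj bB (T_sub b xb yb))).
exact: uniq_c b' (conj b'B (T_sub b' xb' yb')).
Qed.

Lemma steiner_card_blocks : #|B| * 'C(k, 2) = 'C(n, 2).
Proof.
pose P2 := [set T : {set 'I_n} | #|T| == 2].
transitivity (\sum_(T in P2) \sum_(b in B) (T \subset b)).
  rewrite exchange_big /= -sum_nat_const; apply: eq_big => // b bB.
  rewrite -(hB.1 b bB) -cards_draws card_sum_ind [RHS]big_mkcond /=.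
  by apply: eq_bigr => T _; rewrite !inE andbC; case: (#|T| == 2); case: (T \subset b).
rewrite -[n in 'C(n, 2)]card_ord -card_draws -sum1_card.
apply: eq_bigr => T; rewrite inE => /eqP T2.
case: (hB.2 _ T2) => b0 [[b0B Tb0] uniq_b0].
rewrite (bigD1 b0) //= Tb0 big1 // => b /andP [bB bb0].
case: (boolP (T \subset b)) => // Tb; move/eqP: bb0; case.
exact: esym (uniq_b0 b (conj bB Tb)).
Qed.

Lemma pencil_card_lb (p : 'I_n) : n.-1 <= #|pencil B p| * k.-1.
Proof.
have -> : n.-1 = \sum_r (r != p).
  rewrite -[n in n.-1]card_ord -(cardsC1 p) card_sum_ind.
  by apply: eq_bigr => r _; rewrite !inE.
have -> : #|pencil B p| * k.-1 = \sum_r \sum_(b in pencil B p) (r \in b :\ p).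
  rewrite exchange_big /= -sum_nat_const; apply: eq_bigr => b.
  rewrite !inE => /andP [bB pb]; rewrite -card_sum_ind.
  by have := cardsD1 p b; rewrite pb (hB.1 b bB) add1n => ->.
apply: leq_sum => r _; case: (boolP (r != p)) => //= rp.
have [b bB /andP [rb pb]] := steiner_block_through rp.
by rewrite (bigD1 b) /= ?inE ?bB ?pb ?rp ?rb.
Qed.

End SteinerPairs.

Section BlockCode.
Context {k n m : nat} {B : {set {set 'I_n}}}.
Hypothesis hB : steiner_system 2 k n B.
Hypothesis card_avoiding : forall p, #|B :\: pencil B p| <= m.

Definition block_label (b : {set 'I_n}) (p : 'I_n) : nat :=
  if p \in b then 0 else (index b (enum (B :\: pencil B p))).+1.

Definition block_word (b : {set 'I_n}) : word m.+1 n :=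
  [ffun p => inord (block_label b p)].

Lemma block_wordE b p : b \in B -> block_word b p = block_label b p :> nat.
Proof.
move=> bB; rewrite ffunE inordK // ltnS /block_label.
case: ifP => // pb; apply: leq_trans (card_avoiding p).
by rewrite cardE index_mem mem_enum !inE pb bB.
Qed.

Lemma block_word_eq0 b p : b \in B -> (block_word b p == 0 :> nat) = (p \in b).
Proof. by move=> bB; rewrite block_wordE // /block_label; case: (p \in b). Qed.

Lemma block_word_inj : {in B &, injective block_word}.
Proof.
move=> b b' bB b'B eq_bb'; apply/setP => p.
by rewrite -(block_word_eq0 _ _ bB) -(block_word_eq0 _ _ b'B) eq_bb'.
Qed.

Lemma wt_block_word b : b \in B -> wt (block_word b) = n - k.
Proof.
move=> bB; rewrite /wt (_ : [set i | _] = ~: b).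
  by rewrite -(hB.1 b bB) -[n in n - _]card_ord -(cardsC b) addKn.
by apply/setP => p; rewrite !inE block_word_eq0.
Qed.

(* Distinct blocks avoiding [p] have distinct ranks in [enum (B :\: pencil B p)]. *)
Lemma block_word_agree_sub {b b' : {set 'I_n}} :
  b \in B -> b' \in B -> b != b' ->
  [set p | block_word b p == block_word b' p] \subset b :&: b'.
Proof.
move=> bB b'B /eqP bb'; apply/subsetP => p; rewrite !inE => /eqP /(congr1 val) /=.
rewrite !block_wordE // /block_label.
case pb: (p \in b); case pb': (p \in b') => //= /succn_inj eq_idx.
have avoid c : c \in B -> p \notin c -> c \in enum (B :\: pencil B p).
  by move=> cB pc; rewrite mem_enum !inE cB (negbTE pc).
case: bb'; rewrite -(nth_index b (avoid b bB (negbT pb))) eq_idx.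
by rewrite nth_index // avoid // pb'.
Qed.

Lemma hdist_block_word b b' : b \in B -> b' \in B -> b != b' ->
  n.-1 <= hdist (block_word b) (block_word b').
Proof.
move=> bB b'B bb'.
have := leq_trans (subset_leq_card (block_word_agree_sub bB b'B bb'))
                  (steiner_meet_le1 hB bB b'B bb').
have := agree_hdist (block_word b) (block_word b'); rewrite /agree; lia.
Qed.

Lemma steiner_code_exists : code_exists m.+1 n (n - k) n.-1 #|B|.
Proof.
exists [set block_word b | b in B]; split; first exact: card_in_imset block_word_inj.
split; first by move=> _ /imsetP [b bB ->]; exact: wt_block_word.
move=> _ _ /imsetP [b bB ->] /imsetP [b' b'B ->] ne; apply: hdist_block_word => //.
by apply: contraNneq ne => ->.
Qed.

End BlockCode.

Lemma bin2_projective_plane (s : nat) :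
  'C(s ^ 2 + s + 1, 2) = (s ^ 2 + s + 1) * 'C(s + 1, 2).
Proof.
have double_bin2 m : 2 * 'C(m, 2) = m * m.-1.
  by rewrite (mul_bin_left m 1) bin1 subn1 mulnC.
apply/eqP; rewrite -(eqn_pmul2l (isT : 0 < 2)) mulnCA !double_bin2.
by rewrite !addn1 /=; apply/eqP; nia.
Qed.

Section ProjectivePlane.
Context {s : nat} {B : {set {set 'I_(s ^ 2 + s + 1)}}}.
Hypotheses (s_gt0 : 0 < s) (hB : steiner_system 2 (s + 1) (s ^ 2 + s + 1) B).

Lemma projective_plane_card_blocks : #|B| = s ^ 2 + s + 1.
Proof.
apply/eqP; rewrite -(eqn_pmul2r (_ : 0 < 'C(s + 1, 2))); last by rewrite bin_gt0; lia.
by rewrite steiner_card_blocks // bin2_projective_plane.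
Qed.

Lemma projective_plane_card_avoiding p : #|B :\: pencil B p| <= s ^ 2.
Proof.
have pencil_sub : pencil B p \subset B by apply/subsetP => b; rewrite inE => /andP [].
rewrite cardsD (setIidPr pencil_sub) projective_plane_card_blocks.
move: (pencil_card_lb hB p); move: #|pencil B p| => m.
rewrite !addn1 /= -mulnn -mulSnr leq_pmul2r //; lia.
Qed.

End ProjectivePlane.

Theorem mainTheorem19 (s : nat) (hs : 2 <= s)
  (B : {set {set 'I_(s ^ 2 + s + 1)}})
  (hB : steiner_system 2 (s + 1) (s ^ 2 + s + 1) B) :
  is_q0pp 2 (s + 1) (s ^ 2 + s + 1) (s ^ 2 + 1).
Proof.
have s_gt0 : 0 < s by apply: leq_trans hs.
have dist_eq : s ^ 2 + s + 1 - 2 + 1 = (s ^ 2 + s + 1).-1 by lia.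
have wt_eq : s ^ 2 + s + 1 - (s + 1) = s ^ 2 by lia.
rewrite /is_q0pp bin2_projective_plane mulnK; last by rewrite bin_gt0; lia.
rewrite dist_eq wt_eq; split.
  have := steiner_code_exists hB (projective_plane_card_avoiding s_gt0 hB).
  by rewrite projective_plane_card_blocks // wt_eq [s ^ 2 + 1]addn1.
by move=> q lt_q /projective_code_alphabet_lb; lia.
Qed.
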